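(* Let $\Gamma$ be a labeled graph. For a vertex $p$ of $\Gamma$, let $\Gamma-p$ be the labeled graph obtained by deleting $p$ and all edges incident to $p$ (the remaining vertices relabeled preserving their order). Then $$c_\Gamma=\sum_{p\text{ vertex of }\Gamma}(-1)^{\#\{\text{edges starting at }p\}}\,c_{\Gamma-p}.$$
   Context: A labeled graph with $V$ vertices and $E$ edges is a map $s:\{1,\ldots,E\}\to\mathcal{P}_2\{1,\ldots,V\}$. Each edge with $s(e)=\{i,j\}$, $i<j$, is oriented $i\to j$ (it starts at $i$). Define $c_\Gamma:=\sum_{\sigma\in S_V}\prod_{e:\,i\to j}\operatorname{sign}(\sigma(j)-\sigma(i))$; for the graph with one vertex and no edges, $c=1$. *)

From mathcomp Require Import all_boot all_order all_algebra all_fingroup.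
Set Implicit Arguments. Unset Strict Implicit. Unset Printing Implicit Defensive.
Import Order.TTheory GRing.Theory Num.Theory.
Local Open Scope ring_scope.

(* A labeled graph with V vertices {0,..,V-1} and E edges: the edges are the
   sequence s (of length E; position k = label k+1), each edge {i,j} with i<j
   being stored as the ordered pair (i,j), i.e. oriented i -> j. *)
Definition lgraph (V : nat) := seq ('I_V * 'I_V).

Definition wf_lgraph V (s : lgraph V) : bool := all (fun e : 'I_V * 'I_V => (e.1 < e.2)%N) s.

Definition cG V (s : lgraph V) : int :=
  \sum_(sg : 'S_V) \prod_(e <- s) sgz (Posz (sg e.2) - Posz (sg e.1)).

Definition delete_vertex n (p : 'I_n.+1) (s : lgraph n.+1) : lgraph n :=
  pmap (fun e : 'I_n.+1 * 'I_n.+1 =>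
          match unlift p e.1, unlift p e.2 with
          | Some a, Some b => Some (a, b)
          | _, _ => None
          end) s.

Definition out_deg V (p : 'I_V) (s : lgraph V) : nat := count (fun e : 'I_V * 'I_V => e.1 == p) s.

From mathcomp Require Import all_boot all_order all_algebra all_fingroup.
Set Implicit Arguments. Unset Strict Implicit. Unset Printing Implicit Defensive.
Import Order.TTheory GRing.Theory Num.Theory.
Local Open Scope ring_scope.

(* Group the permutations sg of the vertices by the vertex p that sg sends to
   the top position; those are exactly the lift_perm p ord_max t with t a
   permutation of the other vertices.  As p sits above every other vertex, an
   edge p -> j contributes the sign -1, an edge i -> p contributes +1, and an
   edge avoiding p contributes the same sign under sg as under t acting on
   Gamma - p. *)

Section LiftPermSum.

Variables (R : Type) (idx : R) (op : Monoid.com_law idx).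

Lemma big_perm_onto_lift_perm n (i j : 'I_n.+1) (F : 'S_n.+1 -> R) :
  \big[op/idx]_(s : 'S_n.+1 | s i == j) F s =
  \big[op/idx]_(t : 'S_n) F (lift_perm i j t).
Proof.
rewrite (reindex (lift_perm i j)); last first.
  (* [shrink i s] is [s] read on the complements of [i] and [s i], the inverse of [lift_perm]. *)
  pose shrink i' (s : 'S_n.+1) k := odflt k (unlift (s i') (s (lift i' k))).
  have shrinkK i' (s : 'S_n.+1) k : lift (s i') (shrink i' s k) = s (lift i' k).
    rewrite /shrink; have := neq_lift i' k.
    by rewrite -(can_eq (permK s)) => /unlift_some[] ? ? ->.
  have inj_shrink : injective (shrink i _).
    move=> s; apply: can_inj (shrink (s i) s^-1%g) _ => k'.
    by rewrite {1}/shrink shrinkK !permK liftK.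
  exists (fun s => perm (inj_shrink s)) => [s _ | s].
    by apply/permP=> k'; rewrite permE /shrink lift_perm_lift lift_perm_id liftK.
  move/(s _ =P _) => si; apply/permP=> k.
  case: (unliftP i k) => [k'|] ->; rewrite ?lift_perm_id //.
  by rewrite lift_perm_lift -si permE shrinkK.
by apply: eq_bigl => t; rewrite lift_perm_id eqxx.
Qed.

Lemma big_perm_lift_perm n (j : 'I_n.+1) (F : 'S_n.+1 -> R) :
  \big[op/idx]_(s : 'S_n.+1) F s =
  \big[op/idx]_(i : 'I_n.+1) \big[op/idx]_(t : 'S_n) F (lift_perm i j t).
Proof.
rewrite (partition_big (fun s : 'S_n.+1 => (s^-1)%g j) predT) //=.
apply: eq_bigr => i _; rewrite -big_perm_onto_lift_perm.
by apply: eq_bigl => s; rewrite -(inj_eq (@perm_inj _ s)) permKV eq_sym.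
Qed.

End LiftPermSum.

Definition edge_sgz V (sg : 'S_V) (e : 'I_V * 'I_V) : int :=
  sgz (Posz (sg e.2) - Posz (sg e.1)).

Definition unlift_edge n (p : 'I_n.+1) (e : 'I_n.+1 * 'I_n.+1) : option ('I_n * 'I_n) :=
  match unlift p e.1, unlift p e.2 with
  | Some a, Some b => Some (a, b)
  | _, _ => None
  end.

Lemma delete_vertexE n (p : 'I_n.+1) (s : lgraph n.+1) :
  delete_vertex p s = pmap (unlift_edge p) s.
Proof. by []. Qed.

Lemma edge_sgz_lift_perm_max n (p : 'I_n.+1) (t : 'S_n) (e : 'I_n.+1 * 'I_n.+1) :
  (e.1 < e.2)%N ->
  edge_sgz (lift_perm p ord_max t) e =
  (-1) ^+ (e.1 == p) * oapp (edge_sgz t) 1 (unlift_edge p e).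
Proof.
have top_lift k : nat_of_ord (lift_perm p ord_max t (lift p k)) = t k.
  by rewrite lift_perm_lift lift_max.
have top_p : nat_of_ord (lift_perm p ord_max t p) = n by rewrite lift_perm_id.
have liftF k : (lift p k == p) = false by apply/negbTE; rewrite eq_sym neq_lift.
case: e => a b /=; rewrite /edge_sgz /unlift_edge /=.
case: (unliftP p a) => [a'|] ->; case: (unliftP p b) => [b'|] -> //=;
  rewrite ?top_lift ?top_p ?liftF ?eqxx ?liftK /=.
- by rewrite mul1r.
- by move=> _; apply/eqP; rewrite mul1r sgz_cp0 subr_gt0 ltz_nat.
- by move=> _; rewrite mulr1; apply/eqP; rewrite sgz_cp0 subr_lt0 ltz_nat.
- by rewrite ltnn.
Qed.

Lemma prod_edge_sgz_lift_perm_max n (p : 'I_n.+1) (t : 'S_n) (s : lgraph n.+1) :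
  wf_lgraph s ->
  \prod_(e <- s) edge_sgz (lift_perm p ord_max t) e =
  (-1) ^+ out_deg p s * \prod_(e <- delete_vertex p s) edge_sgz t e.
Proof.
rewrite delete_vertexE big_pmap /out_deg.
elim: s => [|e s IHs] /=; first by rewrite !big_nil mulr1.
case/andP=> lt_e wf_s; rewrite !big_cons edge_sgz_lift_perm_max // IHs //.
by rewrite exprD mulrACA.
Qed.

Theorem mainTheorem10 (n : nat) (s : lgraph n.+1) :
  wf_lgraph s ->
  cG s = \sum_(p : 'I_n.+1) (-1) ^+ (out_deg p s) * cG (delete_vertex p s).
Proof.
move=> wf_s; rewrite /cG (big_perm_lift_perm _ ord_max).
apply: eq_bigr => p _; rewrite big_distrr /=.
by apply: eq_bigr => t _; apply: prod_edge_sgz_lift_perm_max.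
Qed.
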